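(* Let $k \geq 2$, $q \in (G,2)$ where $G = \frac{1+\sqrt5}{2}$, and $m \geq 0$ an integer. Let $$N_k^m(q) = \bigcap_{i=0}^m g_{q,k}^i(\mathcal{U}_q + 1) \cap g_{q,k}^m(\mathcal{U}_q).$$ If $x$ is a real number such that $f_0(x) = qx \in N_k^m(q)$, then $x \in \mathcal{U}_q^{(m+2)} \cap J_q$, and hence $q \in \mathcal{B}_{m+2}$.
   Context: For $q \in (1,2)$ let $I_q = [0, \frac{1}{q-1}]$. A sequence $(\epsilon_j)_{j\ge1} \in \{0,1\}^\mathbb{N}$ is a base $q$ expansion of $x$ if $x = \sum_{j\ge1} \epsilon_j q^{-j}$; $\Sigma_q(x)$ is the set of base $q$ expansions of $x$. $\mathcal{U}_q = \{x \in I_q : |\Sigma_q(x)| = 1\}$, and for $n \ge 2$, $\mathcal{U}_q^{(n)} = \{x \in I_q : |\Sigma_q(x)| = n\}$, $\mathcal{B}_n = \{q \in (1,2) : \mathcal{U}_q^{(n)} \neq \emptyset\}$. $\mathcal{U}_q + 1 = \{u+1 : u \in \mathcal{U}_q\}$. The maps are $f_0(x) = qx$ and $f_1(x) = qx - 1$, with inverses $f_0^{-1}(x) = x/q$, $f_1^{-1}(x) = (x+1)/q$. $g_{q,k} = f_1^{-(k-1)} \circ f_0^{-1}$, i.e. the affine map $g_{q,k}(x) = q^{-k}x + \sum_{j=1}^{k-1} q^{-j}$, and $g_{q,k}^i$ is its $i$-fold composition ($g^0$ is the identity). $J_q = [\frac1q, \frac{1}{q(q-1)}]$. *)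

From Stdlib Require Import Reals Lra List.
Open Scope R_scope.

(* A 0-1 sequence (eps_j)_{j>=1} is represented by eps : nat -> bool,
   with eps n standing for eps_{n+1}. *)
Definition digit_term (q : R) (eps : nat -> bool) (n : nat) : R :=
  if eps n then / q ^ (S n) else 0.

Definition is_expansion (q x : R) (eps : nat -> bool) : Prop :=
  infinite_sum (digit_term q eps) x.

Definition I_q (q x : R) : Prop := 0 <= x <= / (q - 1).

Definition J_q (q x : R) : Prop := / q <= x <= / (q * (q - 1)).

Definition has_card (P : (nat -> bool) -> Prop) (n : nat) : Prop :=
  exists l : list (nat -> bool),
    NoDup l /\ length l = n /\ (forall e, P e <-> In e l).

Definition U_q_n (q : R) (n : nat) (x : R) : Prop :=
  I_q q x /\ has_card (is_expansion q x) n.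

Definition U_q (q x : R) : Prop := U_q_n q 1 x.

Definition U_q_plus1 (q y : R) : Prop := exists u, U_q q u /\ y = u + 1.

Definition B_n (n : nat) (q : R) : Prop :=
  1 < q < 2 /\ exists x, U_q_n q n x.

Definition f0_inv (q x : R) : R := x / q.
Definition f1_inv (q x : R) : R := (x + 1) / q.

Definition g_qk (q : R) (k : nat) (x : R) : R :=
  Nat.iter (k - 1) (f1_inv q) (f0_inv q x).

Definition g_qk_iter (q : R) (k i : nat) (x : R) : R :=
  Nat.iter i (g_qk q k) x.

Definition image_set (f : R -> R) (S : R -> Prop) (y : R) : Prop :=
  exists u, S u /\ y = f u.

Definition N_km (q : R) (k m : nat) (y : R) : Prop :=
  (forall i : nat, (i <= m)%nat -> image_set (g_qk_iter q k i) (U_q_plus1 q) y)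
  /\ image_set (g_qk_iter q k m) (U_q q) y.

Definition golden : R := (1 + sqrt 5) / 2.

From Stdlib Require Import Reals Lra Lia List FinFun FunctionalExtensionality.
Open Scope R_scope.

(* Sorting the expansions of z by their first digit gives
   |Sigma_q(z)| = |Sigma_q(q z)| + |Sigma_q(q z - 1)|.  For q above the golden
   ratio, a point v >= 1/q has exactly as many expansions as f_1^{-1}(v),
   because v + 1 >= 1/q + 1 > 1/(q - 1) leaves no room for a first digit 0.
   Hence g_{q,k} maps a point y of U_q + 1 with n expansions to a point with
   n + 1 expansions (the extra one comes from y - 1 in U_q), and induction on m
   shows that points of N_k^m(q) have m + 1 expansions.  One more application
   of f_0^{-1}, again with qx - 1 in U_q, gives the m + 2 expansions of x. *)

Lemma Un_cv_affine (u v : nat -> R) (a b l : R) :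
  0 < a -> (forall n, v n = a * u n + b) -> Un_cv u l -> Un_cv v (a * l + b).
Proof.
  intros Ha Hv Hu eps Heps.
  destruct (Hu (eps / a)) as [N HN]; [apply Rdiv_lt_0_compat; lra|].
  exists N; intros n Hn.
  specialize (HN n Hn); unfold Rdist in *.
  rewrite Hv.
  replace (a * u n + b - (a * l + b)) with (a * (u n - l)) by ring.
  rewrite Rabs_mult, (Rabs_pos_eq a) by lra.
  apply (Rmult_lt_compat_l a) in HN; [|lra].
  replace (a * (eps / a)) with eps in HN by (field; lra).
  exact HN.
Qed.

Lemma Un_cv_bounds (u : nat -> R) (lo hi l : R) :
  (forall n, lo <= u n <= hi) -> Un_cv u l -> lo <= l <= hi.
Proof.
  intros Hb Hu.
  split; apply Rnot_lt_le; intro Hl.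
  - destruct (Hu (lo - l)) as [N HN]; [lra|].
    specialize (HN N (le_n N)); specialize (Hb N).
    unfold Rdist in HN; apply Rabs_def2 in HN; lra.
  - destruct (Hu (l - hi)) as [N HN]; [lra|].
    specialize (HN N (le_n N)); specialize (Hb N).
    unfold Rdist in HN; apply Rabs_def2 in HN; lra.
Qed.

Definition seq_tail (e : nat -> bool) : nat -> bool := fun n => e (S n).

Definition seq_cons (b : bool) (e : nat -> bool) : nat -> bool :=
  fun n => match n with O => b | S n' => e n' end.

Definition digit_value (b : bool) : R := if b then 1 else 0.

Lemma seq_cons_tail (e : nat -> bool) : seq_cons (e O) (seq_tail e) = e.
Proof. apply functional_extensionality; intros [|n]; reflexivity. Qed.

Lemma seq_cons_inj (b : bool) : Injective (seq_cons b).
Proof.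
  intros e1 e2 H; apply functional_extensionality; intro n.
  exact (f_equal (fun e => e (S n)) H).
Qed.

Lemma has_card_nil (P : (nat -> bool) -> Prop) :
  (forall e, ~ P e) -> has_card P 0.
Proof.
  intro H; exists nil; simpl; repeat split; [constructor | apply H | tauto].
Qed.

Lemma has_card_S_ex (P : (nat -> bool) -> Prop) (n : nat) :
  has_card P (S n) -> exists e, P e.
Proof.
  intros [[|e l] [_ [L I]]]; [discriminate|].
  exists e; apply I; left; reflexivity.
Qed.

Section Expansions.

Variable q : R.
Hypothesis q_gt1 : 1 < q.

Lemma sum_digit_term_S (e : nat -> bool) (n : nat) :
  sum_f_R0 (digit_term q e) (S n) =
  digit_value (e O) / q + / q * sum_f_R0 (digit_term q (seq_tail e)) n.
Proof.
  rewrite decomp_sum by lia; simpl pred.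
  rewrite scal_sum, (sum_eq _ (fun i => digit_term q (seq_tail e) i * / q)).
  - unfold digit_term at 1, digit_value; destruct (e O); simpl; field; lra.
  - intros i _; unfold digit_term, seq_tail; destruct (e (S i)); [|ring].
    simpl pow; field; repeat split; try apply pow_nonzero; lra.
Qed.

Lemma is_expansion_tail (x : R) (e : nat -> bool) :
  is_expansion q x e <->
  is_expansion q (q * x - digit_value (e O)) (seq_tail e).
Proof.
  change (Un_cv (sum_f_R0 (digit_term q e)) x <->
          Un_cv (sum_f_R0 (digit_term q (seq_tail e))) (q * x - digit_value (e O))).
  split; intro H.
  - apply CV_shift' with (k := 1%nat) in H.
    replace (q * x - digit_value (e O)) with (q * x + - digit_value (e O)) by ring.
    refine (Un_cv_affine _ _ _ _ _ _ _ H); [lra|].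
    intro n; rewrite Nat.add_1_r, sum_digit_term_S; field; lra.
  - apply CV_shift with (k := 1%nat).
    replace x with (/ q * (q * x - digit_value (e O)) + digit_value (e O) / q)
      by (field; lra).
    refine (Un_cv_affine _ _ _ _ _ _ _ H); [apply Rinv_0_lt_compat; lra|].
    intro n; rewrite Nat.add_1_r, sum_digit_term_S; ring.
Qed.

Lemma sum_digit_term_bounds (e : nat -> bool) (n : nat) :
  0 <= sum_f_R0 (digit_term q e) n <= / (q - 1).
Proof.
  assert (Hq : 0 < / q) by (apply Rinv_0_lt_compat; lra).
  assert (Hq1 : / q <= / (q - 1)) by (apply Rinv_le_contravar; lra).
  assert (Hsum : / q + / q * / (q - 1) = / (q - 1)) by (field; lra).
  revert e; induction n as [|n IH]; intro e.
  - simpl; unfold digit_term; destruct (e O); simpl; rewrite ?Rmult_1_r; lra.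
  - rewrite sum_digit_term_S; specialize (IH (seq_tail e)).
    unfold digit_value; destruct (e O); unfold Rdiv;
      rewrite ?Rmult_1_l, ?Rmult_0_l; split; nra.
Qed.

Lemma is_expansion_I_q (x : R) (e : nat -> bool) :
  is_expansion q x e -> I_q q x.
Proof. exact (Un_cv_bounds _ _ _ _ (sum_digit_term_bounds e)). Qed.

Lemma has_card_expansion_split (z : R) (a b : nat) :
  has_card (is_expansion q (q * z)) a ->
  has_card (is_expansion q (q * z - 1)) b ->
  has_card (is_expansion q z) (a + b).
Proof.
  intros [l0 [N0 [L0 I0]]] [l1 [N1 [L1 I1]]].
  exists (map (seq_cons false) l0 ++ map (seq_cons true) l1); split; [|split].
  - apply NoDup_app;
      try (apply Injective_map_NoDup; [apply seq_cons_inj | assumption]).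
    intros e H0 H1; apply in_map_iff in H0, H1.
    destruct H0 as [e0 [<- _]], H1 as [e1 [H _]].
    discriminate (f_equal (fun e => e O) H).
  - rewrite length_app, !length_map; lia.
  - intro e; rewrite in_app_iff, !in_map_iff, is_expansion_tail.
    split.
    + intro H; destruct (e O) eqn:E; [right | left]; exists (seq_tail e);
        (split; [rewrite <- E; apply seq_cons_tail|]).
      * apply I1, H.
      * apply I0; rewrite <- (Rminus_0_r (q * z)); exact H.
    + intros [[e' [<- H]] | [e' [<- H]]]; simpl; unfold digit_value.
      * rewrite Rminus_0_r; apply I0, H.
      * apply I1, H.
Qed.

Lemma has_card_expansion_succ (z : R) (n : nat) :
  has_card (is_expansion q (q * z)) n -> U_q_plus1 q (q * z) ->
  has_card (is_expansion q z) (S n).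
Proof.
  intros Hn [u [[_ Hu] Eu]].
  rewrite <- Nat.add_1_r; apply has_card_expansion_split; [exact Hn|].
  replace (q * z - 1) with u by lra; exact Hu.
Qed.

Lemma J_q_f0_inv (y : R) : 1 <= y -> I_q q y -> J_q q (f0_inv q y).
Proof.
  intros H1 [_ H2]; unfold J_q, f0_inv, Rdiv.
  rewrite Rinv_mult, Rmult_comm.
  assert (0 < / q) by (apply Rinv_0_lt_compat; lra).
  split; nra.
Qed.

Lemma J_q_I_q (x : R) : J_q q x -> I_q q x.
Proof.
  intros [H1 H2]; split.
  - assert (0 < / q) by (apply Rinv_0_lt_compat; lra); lra.
  - apply (Rle_trans _ _ _ H2), Rinv_le_contravar; nra.
Qed.

Hypothesis q_above_golden : q + 1 < q * q.

Lemma not_I_q_add1 (v : R) : / q <= v -> ~ I_q q (v + 1).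
Proof.
  intros Hv [_ Hle].
  assert (/ (q - 1) < / q + 1); [|lra].
  apply (Rmult_lt_reg_r (q * (q - 1))); [nra|].
  replace (/ (q - 1) * (q * (q - 1))) with q by (field; lra).
  replace ((/ q + 1) * (q * (q - 1))) with (q - 1 + q * (q - 1)) by (field; lra).
  nra.
Qed.

Lemma has_card_f1_inv (v : R) (c : nat) :
  / q <= v -> has_card (is_expansion q v) c ->
  has_card (is_expansion q (f1_inv q v)) c.
Proof.
  intros Hv Hc; unfold f1_inv; rewrite <- (Nat.add_0_l c).
  apply has_card_expansion_split.
  - replace (q * ((v + 1) / q)) with (v + 1) by (field; lra).
    apply has_card_nil; intros e He.
    exact (not_I_q_add1 _ Hv (is_expansion_I_q _ _ He)).
  - replace (q * ((v + 1) / q) - 1) with v by (field; lra); exact Hc.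
Qed.

Lemma has_card_iter_f1_inv (n : nat) (v : R) (c : nat) :
  / q <= v -> has_card (is_expansion q v) c ->
  has_card (is_expansion q (Nat.iter n (f1_inv q) v)) c.
Proof.
  intros Hv Hc; induction n as [|n IH]; simpl; [exact Hc|].
  apply has_card_f1_inv; [|exact IH].
  assert (Hq : 0 < / q) by (apply Rinv_0_lt_compat; lra).
  clear IH; induction n as [|n IH]; simpl; [exact Hv|].
  unfold f1_inv at 1, Rdiv; nra.
Qed.

Lemma has_card_g_qk (k : nat) (y : R) (n : nat) :
  has_card (is_expansion q y) n -> U_q_plus1 q y ->
  has_card (is_expansion q (g_qk q k y)) (S n).
Proof.
  intros Hn Hy.
  assert (Hqy : q * f0_inv q y = y) by (unfold f0_inv; field; lra).
  apply has_card_iter_f1_inv.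
  - destruct Hy as [u [[[Hu _] _] ->]].
    assert (0 < / q) by (apply Rinv_0_lt_compat; lra).
    unfold f0_inv, Rdiv; nra.
  - apply has_card_expansion_succ; rewrite Hqy; assumption.
Qed.

Lemma iter_injective {A : Type} (f : A -> A) (n : nat) :
  Injective f -> Injective (Nat.iter n f).
Proof.
  intros Hf; induction n as [|n IH]; intros a b H; [exact H|].
  exact (IH _ _ (Hf _ _ H)).
Qed.

Lemma g_qk_inj (k : nat) : Injective (g_qk q k).
Proof.
  assert (f0_inj : Injective (f0_inv q)).
  { intros a b H; unfold f0_inv in H.
    apply (Rmult_eq_compat_r q) in H; field_simplify in H; lra. }
  assert (f1_inj : Injective (f1_inv q)).
  { intros a b H; unfold f1_inv in H.
    apply (Rmult_eq_compat_r q) in H; field_simplify in H; lra. }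
  intros a b H; apply f0_inj, (iter_injective _ (k - 1) f1_inj), H.
Qed.

Lemma N_km_U_q_plus1 (k m : nat) (y : R) : N_km q k m y -> U_q_plus1 q y.
Proof. intros [H _]; destruct (H O (Nat.le_0_l m)) as [u [Hu ->]]; exact Hu. Qed.

Lemma N_km_S_inv (k m : nat) (y : R) :
  N_km q k (S m) y -> exists y', y = g_qk q k y' /\ N_km q k m y'.
Proof.
  intros [Hplus [u [Hu Eu]]].
  destruct (Hplus 1%nat ltac:(lia)) as [s [_ Es]]; simpl in Es.
  exists s; split; [exact Es|]; split.
  - intros i Hi; destruct (Hplus (S i) ltac:(lia)) as [s' [Hs' Es']].
    exists s'; split; [exact Hs'|].
    apply (g_qk_inj k); simpl in Es'; congruence.
  - exists u; split; [exact Hu|].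
    apply (g_qk_inj k); simpl in Eu; congruence.
Qed.

Lemma has_card_N_km (k m : nat) (y : R) :
  N_km q k m y -> has_card (is_expansion q y) (S m).
Proof.
  revert y; induction m as [|m IH]; intros y Hy.
  - destruct Hy as [_ [u [[_ Hu] ->]]]; exact Hu.
  - destruct (N_km_S_inv _ _ _ Hy) as [y' [-> Hy']].
    apply has_card_g_qk; [exact (IH _ Hy') | exact (N_km_U_q_plus1 _ _ _ Hy')].
Qed.

End Expansions.

Lemma golden_gt1 : 1 < golden.
Proof.
  unfold golden.
  assert (2 < sqrt 5); [|lra].
  rewrite <- (sqrt_square 2) by lra; apply sqrt_lt_1; lra.
Qed.

Lemma golden_lt_sqr (q : R) : golden < q -> q + 1 < q * q.
Proof.
  unfold golden; intro Hq.
  pose proof (sqrt_sqrt 5 ltac:(lra)); pose proof (sqrt_pos 5).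
  nra.
Qed.

Theorem proposition2p6 (k : nat) (q : R) (m : nat) (x : R) :
  (2 <= k)%nat -> golden < q < 2 ->
  N_km q k m (q * x) ->
  (U_q_n q (m + 2) x /\ J_q q x) /\ B_n (m + 2) q.
Proof.
  intros _ [Hgolden Hq2] HN.
  assert (Hq1 : 1 < q) by (pose proof golden_gt1; lra).
  pose proof (golden_lt_sqr _ Hgolden) as Hsqr.
  pose proof (has_card_N_km q Hq1 Hsqr _ _ _ HN) as Hqx.
  assert (Hx : has_card (is_expansion q x) (m + 2)).
  { replace (m + 2)%nat with (S (S m)) by lia.
    exact (has_card_expansion_succ q Hq1 _ _ Hqx (N_km_U_q_plus1 _ _ _ _ HN)). }
  assert (Jx : J_q q x).
  { replace x with (f0_inv q (q * x)) by (unfold f0_inv; field; lra).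
    apply J_q_f0_inv; [exact Hq1| |].
    - destruct (N_km_U_q_plus1 _ _ _ _ HN) as [u [[[Hu _] _] ->]]; lra.
    - destruct (has_card_S_ex _ _ Hqx) as [e He].
      exact (is_expansion_I_q q Hq1 _ _ He). }
  assert (Ux : U_q_n q (m + 2) x) by (split; [apply J_q_I_q|]; assumption).
  split; [split; assumption|].
  split; [split; assumption | exists x; exact Ux].
Qed.
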